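(* If $\Phi$ is a depth-bounded fuzzy bisimulation between fuzzy automata $\mathcal{A}$ and $\mathcal{A}'$, then $\|\Phi\|^b_{\mathcal{A},\mathcal{A}'}\le E(\mathbf{L}(\mathcal{A}),\mathbf{L}(\mathcal{A}'))$.
   Context: $\mathcal{L}=\langle L,\le,\otimes,\Rightarrow,0,1\rangle$ is a complete residuated lattice: $\langle L,\le,0,1\rangle$ is a complete lattice with least element $0$ and greatest element $1$, $\langle L,\otimes,1\rangle$ is a commutative monoid, and $x\otimes y\le z$ iff $x\le (y\Rightarrow z)$; $x\Leftrightarrow y=(x\Rightarrow y)\wedge(y\Rightarrow x)$. Fuzzy sets/relations are maps into $L$ ordered pointwise; $\varphi^{-1}(b,a)=\varphi(a,b)$; $(\varphi\circ\psi)(a,c)=\bigvee_b\varphi(a,b)\otimes\psi(b,c)$, $(f\circ\varphi)(b)=\bigvee_a f(a)\otimes\varphi(a,b)$, $(\varphi\circ g)(a)=\bigvee_b\varphi(a,b)\otimes g(b)$; $S(g,f)=\bigwedge_a(g(a)\Rightarrow f(a))$, $E(g,f)=\bigwedge_a(g(a)\Leftrightarrow f(a))$. A fuzzy automaton over $\Sigma$ is $\mathcal{A}=\langle A,\delta^{\mathcal{A}},\sigma^{\mathcal{A}},\tau^{\mathcal{A}}\rangle$ with $A$ nonempty, $\delta^{\mathcal{A}}:A\times\Sigma\times A\to L$, $\sigma^{\mathcal{A}},\tau^{\mathcal{A}}:A\to L$; $\delta^{\mathcal{A}}_s(x,y)=\delta^{\mathcal{A}}(x,s,y)$; similarly $\mathcal{A}'$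 with states $A'$. $\mathbf{L}(\mathcal{A})(s_1\cdots s_k)=\sigma^{\mathcal{A}}\circ\delta^{\mathcal{A}}_{s_1}\circ\cdots\circ\delta^{\mathcal{A}}_{s_k}\circ\tau^{\mathcal{A}}$. $\|\varphi\|_{\mathcal{A},\mathcal{A}'}=S(\sigma^{\mathcal{A}},\sigma^{\mathcal{A}'}\circ\varphi^{-1})$. A depth-bounded fuzzy bisimulation between $\mathcal{A}$ and $\mathcal{A}'$ is a sequence $\Phi=(\varphi_n)_{n\in\mathbb{N}}$ of fuzzy relations $A\times A'\to L$ with $\varphi_n\le\varphi_{n-1}$ ($n\ge1$), $\varphi_0^{-1}\circ\tau^{\mathcal{A}}\le\tau^{\mathcal{A}'}$, $\varphi_0\circ\tau^{\mathcal{A}'}\le\tau^{\mathcal{A}}$, and for all $s\in\Sigma,n\ge1$: $\varphi_n^{-1}\circ\delta^{\mathcal{A}}_s\le\delta^{\mathcal{A}'}_s\circ\varphi_{n-1}^{-1}$ and $\varphi_n\circ\delta^{\mathcal{A}'}_s\le\delta^{\mathcal{A}}_s\circ\varphi_{n-1}$. Its norm is $\|\Phi\|^b_{\mathcal{A},\mathcal{A}'}=\bigwedge_n\|\varphi_n\|_{\mathcal{A},\mathcal{A}'}\wedge\bigwedge_n\|\varphi_n^{-1}\|_{\mathcal{A}',\mathcal{A}}$. *)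

From Stdlib Require Import List.
Import ListNotations.

Set Implicit Arguments.

Record crl := CRL {
  car :> Type;
  le : car -> car -> Prop;
  mul : car -> car -> car;
  res : car -> car -> car;
  zero : car;
  one : car;
  sup : (car -> Prop) -> car;
  le_refl : forall x, le x x;
  le_trans : forall x y z, le x y -> le y z -> le x z;
  le_antisym : forall x y, le x y -> le y x -> x = y;
  sup_ub : forall (S : car -> Prop) x, S x -> le x (sup S);
  sup_least : forall (S : car -> Prop) y, (forall x, S x -> le x y) -> le (sup S) y;
  zero_least : forall x, le zero x;
  one_greatest : forall x, le x one;
  mulA : forall x y z, mul x (mul y z) = mul (mul x y) z;
  mulC : forall x y, mul x y = mul y x;
  mul1 : forall x, mul x one = x;
  adjunction : forall x y z, le (mul x y) z <-> le x (res y z)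
}.

Arguments le {c}.
Arguments mul {c}.
Arguments res {c}.
Arguments sup {c}.
Arguments zero {c}.
Arguments one {c}.

Section Ops.
Context {L : crl}.

Definition inf (S : L -> Prop) : L := sup (fun x => forall y, S y -> le x y).
Definition meet (x y : L) : L := inf (fun z => z = x \/ z = y).
Definition biimp (x y : L) : L := meet (res x y) (res y x).

Definition fle {A : Type} (f g : A -> L) : Prop := forall a, le (f a) (g a).
Definition rle {A B : Type} (f g : A -> B -> L) : Prop :=
  forall a b, le (f a b) (g a b).
Definition rinv {A B : Type} (phi : A -> B -> L) : B -> A -> L := fun b a => phi a b.
Definition rcomp {A B C : Type} (phi : A -> B -> L) (psi : B -> C -> L) : A -> C -> L :=
  fun a c => sup (fun x => exists b, x = mul (phi a b) (psi b c)).
Definition scomp {A B : Type} (f : A -> L) (phi : A -> B -> L) : B -> L :=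
  fun b => sup (fun x => exists a, x = mul (f a) (phi a b)).
Definition compg {A B : Type} (phi : A -> B -> L) (g : B -> L) : A -> L :=
  fun a => sup (fun x => exists b, x = mul (phi a b) (g b)).
Definition ssc {A : Type} (f g : A -> L) : L :=
  sup (fun x => exists a, x = mul (f a) (g a)).
Definition Sdeg {A : Type} (g f : A -> L) : L :=
  inf (fun x => exists a, x = res (g a) (f a)).
Definition Edeg {A : Type} (g f : A -> L) : L :=
  inf (fun x => exists a, x = biimp (g a) (f a)).
End Ops.

Record fuzzy_automaton (L : crl) (Sigma : Type) := FA {
  st : Type;
  st_inhabited : inhabited st;
  delta : st -> Sigma -> st -> L;
  sigma0 : st -> L;
  tau0 : st -> L
}.

Arguments st {L Sigma}.
Arguments delta {L Sigma}.
Arguments sigma0 {L Sigma}.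
Arguments tau0 {L Sigma}.

Section Aut.
Variables (L : crl) (Sigma : Type).

Definition delta_s (A : fuzzy_automaton L Sigma) (s : Sigma) : st A -> st A -> L :=
  fun x y => delta A x s y.

Fixpoint fwd (A : fuzzy_automaton L Sigma) (f : st A -> L) (w : list Sigma) : st A -> L :=
  match w with
  | [] => f
  | s :: w' => fwd A (scomp f (delta_s A s)) w'
  end.

Definition lang (A : fuzzy_automaton L Sigma) (w : list Sigma) : L :=
  ssc (fwd A (sigma0 A) w) (tau0 A).

Definition rnorm (A A' : fuzzy_automaton L Sigma) (phi : st A -> st A' -> L) : L :=
  Sdeg (sigma0 A) (scomp (sigma0 A') (rinv phi)).

Definition depth_bounded_bisim (A A' : fuzzy_automaton L Sigma)
    (Phi : nat -> st A -> st A' -> L) : Prop :=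
  (forall n, rle (Phi (S n)) (Phi n)) /\
  fle (compg (rinv (Phi 0)) (tau0 A)) (tau0 A') /\
  fle (compg (Phi 0) (tau0 A')) (tau0 A) /\
  (forall (s : Sigma) (n : nat),
      rle (rcomp (rinv (Phi (S n))) (delta_s A s))
          (rcomp (delta_s A' s) (rinv (Phi n)))) /\
  (forall (s : Sigma) (n : nat),
      rle (rcomp (Phi (S n)) (delta_s A' s))
          (rcomp (delta_s A s) (Phi n))).

Definition bnorm (A A' : fuzzy_automaton L Sigma)
    (Phi : nat -> st A -> st A' -> L) : L :=
  meet (inf (fun x => exists n, x = rnorm A A' (Phi n)))
       (inf (fun x => exists n, x = rnorm A' A (rinv (Phi n)))).
End Aut.

(* Fix a degree x, fuzzy sets f on the states of A and f' on the states of A',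
   and a fuzzy relation psi between them.  Say that psi carries f into f' up
   to x when  x (x) f <= f' o psi^{-1}.  The proof has three layers:
   1. Lattice facts: (x) is monotone and distributes over suprema, infima and
      meets are characterised by their bounds, and x <= (a <=> b) follows
      from x (x) a <= b and x (x) b <= a.
   2. Transfer: if psi_{n+1}^{-1} o delta_s <= delta'_s o psi_n^{-1} and
      phi_{n+1} carries f into f' up to x, then phi_n carries f o delta_s
      into f' o delta'_s up to x; iterating over a word w of length k moves
      the bound from phi_k to phi_0.  Since ||phi_k|| is exactly the largest
      x for which phi_k carries sigma into sigma', and phi_0^{-1} o tau <= tau',
      we get  ||phi_|w||| (x) L(A)(w) <= L(A')(w)  for every "forward"
      simulation (Lemma forward_language_bound).
   3. A depth-bounded bisimulation is forward in both directions; the norm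
      ||Phi||^b lies below both ||phi_|w||| and ||phi_|w|^{-1}||, hence below
      L(A)(w) <=> L(A')(w) for every w, hence below E(L(A), L(A')). *)

From Stdlib Require Import List Arith.
Import ListNotations.

Section LatticeFacts.
Variable L : crl.
Implicit Types x y z : L.

Lemma le_sup_of (S : L -> Prop) x y : S y -> le x y -> le x (sup S).
Proof. intros Hy Hxy; eapply le_trans; [exact Hxy | apply sup_ub; exact Hy]. Qed.

Lemma mul_mono_l x y z : le x y -> le (mul x z) (mul y z).
Proof.
  intros Hxy. apply adjunction. eapply le_trans; [exact Hxy|].
  apply adjunction, le_refl.
Qed.

Lemma mul_mono_r x y z : le x y -> le (mul z x) (mul z y).
Proof. intros Hxy. rewrite (mulC L z x), (mulC L z y). now apply mul_mono_l. Qed.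

Lemma mul_sup_l_le (S : L -> Prop) z y :
  (forall s, S s -> le (mul s z) y) -> le (mul (sup S) z) y.
Proof.
  intros H. apply adjunction, sup_least. intros s Hs. now apply adjunction, H.
Qed.

Lemma mul_sup_r_le (S : L -> Prop) z y :
  (forall s, S s -> le (mul z s) y) -> le (mul z (sup S)) y.
Proof.
  intros H. rewrite mulC. apply mul_sup_l_le. intros s Hs. rewrite mulC. auto.
Qed.

Lemma inf_lb (S : L -> Prop) y : S y -> le (inf S) y.
Proof. intros Hy. apply sup_least. auto. Qed.

Lemma inf_glb (S : L -> Prop) x : (forall y, S y -> le x y) -> le x (inf S).
Proof. intros H. now apply sup_ub. Qed.

Lemma meet_l x y : le (meet x y) x.
Proof. apply inf_lb; auto. Qed.

Lemma meet_r x y : le (meet x y) y.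
Proof. apply inf_lb; auto. Qed.

Lemma meet_glb x y z : le z x -> le z y -> le z (meet x y).
Proof. intros Hx Hy. apply inf_glb. now intros w [-> | ->]. Qed.

Lemma le_biimp x a b :
  le (mul x a) b -> le (mul x b) a -> le x (biimp a b).
Proof. intros Hab Hba. apply meet_glb; now apply adjunction. Qed.
End LatticeFacts.

Section Transfer.
Variable L : crl.

Definition carries {A B : Type} (x : L) (psi : A -> B -> L)
    (f : A -> L) (f' : B -> L) : Prop :=
  forall a, le (mul x (f a)) (scomp f' (rinv psi) a).

Lemma carries_step {A B : Type} (x : L) (psi chi : A -> B -> L)
    (f : A -> L) (f' : B -> L) (d : A -> A -> L) (d' : B -> B -> L) :
  rle (rcomp (rinv psi) d) (rcomp d' (rinv chi)) ->
  carries x psi f f' -> carries x chi (scomp f d) (scomp f' d').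
Proof.
  intros Hsim Hf b.
  (* x (x) f(a) (x) d(a,b) <= (f' o psi^{-1})(a) (x) d(a,b) *)
  apply mul_sup_r_le. intros t [a ->].
  rewrite mulA. eapply le_trans; [apply mul_mono_l, Hf|].
  apply mul_sup_l_le. intros t [a' ->].
  (* f'(a') (x) psi(a,a') (x) d(a,b) <= f'(a') (x) (d' o chi^{-1})(a',b) *)
  rewrite <- mulA. eapply le_trans.
  { apply mul_mono_r. eapply le_trans; [| apply (Hsim a' b)].
    apply sup_ub. now exists a. }
  apply mul_sup_r_le. intros t [c ->].
  rewrite mulA. apply le_sup_of with (y := mul (scomp f' d' c) (rinv chi c b)).
  - now exists c.
  - apply mul_mono_l. apply sup_ub. now exists a'.
Qed.

Variable Sigma : Type.

Definition forward_sim (A A' : fuzzy_automaton L Sigma)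
    (Phi : nat -> st A -> st A' -> L) : Prop :=
  fle (compg (rinv (Phi 0)) (tau0 A)) (tau0 A') /\
  (forall (s : Sigma) (n : nat),
      rle (rcomp (rinv (Phi (S n))) (delta_s A s))
          (rcomp (delta_s A' s) (rinv (Phi n)))).

Lemma carries_fwd (A A' : fuzzy_automaton L Sigma)
    (Phi : nat -> st A -> st A' -> L) :
  (forall (s : Sigma) (n : nat),
      rle (rcomp (rinv (Phi (S n))) (delta_s A s))
          (rcomp (delta_s A' s) (rinv (Phi n)))) ->
  forall w m f f' x,
  carries x (Phi (length w + m)) f f' ->
  carries x (Phi m) (fwd A f w) (fwd A' f' w).
Proof.
  intros Hsim. induction w as [|s w IH]; intros m f f' x Hf; simpl in *; auto.
  apply IH. now apply carries_step with (psi := Phi (S (length w + m))).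
Qed.

Lemma carries_rnorm (A A' : fuzzy_automaton L Sigma) (psi : st A -> st A' -> L) :
  carries (rnorm A A' psi) psi (sigma0 A) (sigma0 A').
Proof. intros a. apply adjunction, inf_lb. now exists a. Qed.

Lemma carries_final {A B : Type} (x : L) (psi : A -> B -> L)
    (f : A -> L) (f' : B -> L) (t : A -> L) (t' : B -> L) :
  fle (compg (rinv psi) t) t' ->
  carries x psi f f' -> le (mul x (ssc f t)) (ssc f' t').
Proof.
  intros Ht Hf. apply mul_sup_r_le. intros u [a ->].
  rewrite mulA. eapply le_trans; [apply mul_mono_l, Hf|].
  apply mul_sup_l_le. intros u [b ->].
  rewrite <- mulA. apply le_sup_of with (y := mul (f' b) (t' b)).
  - now exists b.
  - apply mul_mono_r. eapply le_trans; [| apply (Ht b)].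
    apply sup_ub. now exists a.
Qed.

Lemma forward_language_bound (A A' : fuzzy_automaton L Sigma)
    (Phi : nat -> st A -> st A' -> L) :
  forward_sim A A' Phi ->
  forall w, le (mul (rnorm A A' (Phi (length w))) (lang A w)) (lang A' w).
Proof.
  intros [Htau Hsim] w.
  apply carries_final with (psi := Phi 0); [exact Htau|].
  apply carries_fwd; [exact Hsim|].
  rewrite Nat.add_0_r. apply carries_rnorm.
Qed.

Lemma bisim_forward_both (A A' : fuzzy_automaton L Sigma)
    (Phi : nat -> st A -> st A' -> L) :
  depth_bounded_bisim A A' Phi ->
  forward_sim A A' Phi /\ forward_sim A' A (fun n => rinv (Phi n)).
Proof. intros (_ & Htau & Htau' & Hsim & Hsim'). now split; split. Qed.

Lemma bnorm_le_rnorm (A A' : fuzzy_automaton L Sigma)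
    (Phi : nat -> st A -> st A' -> L) (n : nat) :
  le (bnorm A A' Phi) (rnorm A A' (Phi n)).
Proof. eapply le_trans; [apply meet_l | apply inf_lb; now exists n]. Qed.

Lemma bnorm_le_rnorm_inv (A A' : fuzzy_automaton L Sigma)
    (Phi : nat -> st A -> st A' -> L) (n : nat) :
  le (bnorm A A' Phi) (rnorm A' A (rinv (Phi n))).
Proof. eapply le_trans; [apply meet_r | apply inf_lb; now exists n]. Qed.
End Transfer.

Arguments forward_language_bound {L Sigma A A' Phi}.
Arguments bisim_forward_both {L Sigma A A' Phi}.

Theorem mainTheorem15 (L : crl) (Sigma : Type)
  (A A' : fuzzy_automaton L Sigma) (Phi : nat -> st A -> st A' -> L) :
  depth_bounded_bisim A A' Phi ->
  le (bnorm A A' Phi) (Edeg (lang A) (lang A')).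
Proof.
  intros Hbisim.
  destruct (bisim_forward_both Hbisim) as [Hfwd Hbwd].
  apply inf_glb. intros y [w ->].
  apply le_biimp.
  - eapply le_trans; [| apply (forward_language_bound Hfwd w)].
    apply mul_mono_l, bnorm_le_rnorm.
  - eapply le_trans; [| apply (forward_language_bound Hbwd w)].
    apply mul_mono_l, bnorm_le_rnorm_inv.
Qed.
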